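(* Let $d\in\mathbb{N}$, $n\geq 3$, and let $k$ be a nonnegative integer with $k\leq \frac{n}{4d+6}-d-5$. Let $G$ and $H$ be graphs on $n$ vertices, each with average degree at most $d$. Suppose there are distinct vertices $u_1,\dots,u_{n-k}$ of $G$ and distinct vertices $w_1,\dots,w_{n-k}$ of $H$ such that $G-u_i\cong H-w_i$ for every $i\in[n-k]$. Then $|E(G)|=|E(H)|$. (That is, the number of edges of a graph with average degree at most $d$ can be reconstructed from any deck missing at most $\frac{n}{4d+6}-d-5$ cards.)
   Context: All graphs are finite, simple and undirected. For a graph $G$ and $v\in V(G)$, the card $G-v$ is the graph obtained by deleting $v$ and all edges incident to it; the deck of $G$ is the multiset of unlabelled cards $G-v$, $v\in V(G)$. The average degree of an $n$-vertex graph with $m$ edges is $2m/n$. *)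

From mathcomp Require Import all_boot all_order all_algebra.
Set Implicit Arguments. Unset Strict Implicit. Unset Printing Implicit Defensive.

Record sgraph (n : nat) := SGraph {
  adj : rel 'I_n;
  adj_sym : symmetric adj;
  adj_irr : irreflexive adj }.

Definition nedges n (G : sgraph n) : nat :=
  #|[set p : 'I_n * 'I_n | (p.1 < p.2)%N && adj G p.1 p.2]|.

(* The card G - u is isomorphic to the card H - w: there is a bijection
   from V(G) \ {u} onto V(H) \ {w} preserving adjacency and non-adjacency.
   Such a bijection is encoded as a bijection f of 'I_n with f u = w. *)
Definition card_iso n (G : sgraph n) (u : 'I_n) (H : sgraph n) (w : 'I_n) : Prop :=
  exists f : 'I_n -> 'I_n,
    [/\ bijective f, f u = w &
        forall x y, x != u -> y != u -> adj H (f x) (f y) = adj G x y].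

(* Suppose G and H share the n - k cards G - u_i ~ H - w_i but have
   m_G < m_H edges, and put gap = m_H - m_G.  Comparing edge counts of a
   shared card gives deg_H(w_i) = deg_G(u_i) + gap, so summing degrees
   the shared vertices of H carry (n - k) * gap more degree than those of
   G, while the total degree only grows by 2 * gap.  To control the k
   missing vertices we use the excess  excess G T = sum_x (deg x - T)^+
   at the threshold T = 2d + gap: a card G - u with deg u <= d determines
   excess G T up to an additive error d, and the shifted shared degrees
   change the excess by at most gap per shared vertex of degree > 2d
   (few of them, by the average degree bound).  Putting this together
   gives (n - k) * gap <= (N + k + 2) * gap + d * (2k + 1), with N the
   number of such high-degree vertices, which is impossible when
   k <= n / (4d + 6) - d - 5.  By symmetry m_G = m_H. *)

From mathcomp Require Import all_boot all_order all_algebra.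
Import GRing.Theory Num.Theory.
From mathcomp Require Import zify lra.
Set Implicit Arguments. Unset Strict Implicit. Unset Printing Implicit Defensive.

Section Degrees.
Variable n : nat.
Implicit Types (G H : sgraph n) (u w x : 'I_n).

Definition deg G x : nat := \sum_(y < n) adj G x y.
Definition card_deg G u x : nat := \sum_(y < n | y != u) adj G x y.

Definition excess G T : nat := \sum_x (deg G x - T).
Definition card_excess G u T : nat := \sum_(x | x != u) (card_deg G u x - T).

Lemma deg_split G u x : deg G x = card_deg G u x + adj G x u.
Proof. by rewrite /deg (bigD1 u) //= addnC. Qed.

Lemma sum_adj_to G u : \sum_(x | x != u) (adj G x u : nat) = deg G u.
Proof.
rewrite /deg [RHS](bigD1 u) //= adj_irr add0n.
by apply: eq_bigr => x _; rewrite adj_sym.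
Qed.

(* The handshake lemma: each edge xy with x < y is counted from both ends. *)
Lemma handshake G : \sum_x deg G x = 2 * nedges G.
Proof.
have split_pair x y : (adj G x y : nat) = ((x < y) && adj G x y) + ((y < x) && adj G x y).
  by case: (ltngtP x y) => [|_|/val_inj ->]; rewrite ?adj_irr // addn0.
rewrite /deg; under eq_bigr => x _ do under eq_bigr => y _ do rewrite split_pair.
under eq_bigr => x _ do rewrite big_split /=.
rewrite big_split /= [X in _ + X]exchange_big /=.
under [X in _ + X]eq_bigr => x _ do under eq_bigr => y _ do rewrite adj_sym.
rewrite addnn -mul2n; congr (2 * _).
rewrite /nedges -sum1_card pair_big /= [RHS]big_mkcond /=.
by apply: eq_bigr => p _; rewrite in_set; case: (_ && _).
Qed.

Lemma card_handshake G u :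
  \sum_(x | x != u) card_deg G u x + 2 * deg G u = 2 * nedges G.
Proof.
rewrite -handshake [RHS](bigD1 u) //= (eq_bigr _ (fun x _ => deg_split G u x)).
by rewrite big_split /= sum_adj_to; lia.
Qed.

Lemma card_iso_sum G H u w (psi : nat -> nat) : card_iso G u H w ->
  \sum_(x | x != u) psi (card_deg G u x) = \sum_(y | y != w) psi (card_deg H w y).
Proof.
case=> f [fbij fu adjf]; have finj := bij_inj fbij.
have fne x : (f x != w) = (x != u) by rewrite -fu (inj_eq finj).
rewrite [RHS](reindex f) /=; last exact: onW_bij.
apply: eq_big => [x|x xu]; first by rewrite fne.
congr psi; rewrite /card_deg [RHS](reindex f) /=; last exact: onW_bij.
by apply: eq_big => [y|y yu]; rewrite ?fne ?adjf.
Qed.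

Lemma card_iso_sym G H u w : card_iso G u H w -> card_iso H w G u.
Proof.
case=> f [[g fK gK] fu adjf]; exists g; split; first by exists f.
  by rewrite -fu fK.
have gne z : z != w -> g z != u.
  by move=> zw; apply: contra zw => /eqP gz; rewrite -fu -gz gK.
by move=> x y xw yw; rewrite -adjf ?gne // !gK.
Qed.

(* Isomorphic cards have equally many edges: m_G - deg u = m_H - deg w. *)
Lemma card_iso_edges G H u w : card_iso G u H w ->
  nedges G + deg H w = nedges H + deg G u.
Proof.
move=> iso; have := card_iso_sum id iso.
have := card_handshake G u; have := card_handshake H w; lia.
Qed.

Lemma excess_le_card_excess G u T : deg G u <= T ->
  excess G T <= card_excess G u T + deg G u.
Proof.
move=> degu; rewrite /excess (bigD1 u) //= (_ : deg G u - T = 0); last lia.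
rewrite add0n -sum_adj_to -big_split /=.
by apply: leq_sum => x _; rewrite (deg_split G u); lia.
Qed.

Lemma card_excess_le_excess H w T : card_excess H w T <= excess H T.
Proof.
rewrite /excess (bigD1 w) //=; apply: leq_trans (leq_addl _ _).
by apply: leq_sum => y _; rewrite (deg_split H w); lia.
Qed.

Lemma card_iso_excess G H u w d T : card_iso G u H w ->
  deg G u <= d -> d <= T -> excess G T <= excess H T + d.
Proof.
move=> iso degu dT.
apply: leq_trans (excess_le_card_excess (leq_trans degu dT)) _.
rewrite /card_excess (card_iso_sum (fun t => t - T) iso).
by apply: leq_add; [exact: card_excess_le_excess | exact: degu].
Qed.

End Degrees.

Notation missed u := (~: [set u i | i in [set: 'I__]]).

Lemma sum_split_image n m (u : 'I_m -> 'I_n) (F : 'I_n -> nat) : injective u ->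
  \sum_x F x = \sum_i F (u i) + \sum_(x in missed u) F x.
Proof.
move=> uinj; rewrite (bigID (mem [set u i | i in [set: 'I_m]])) /=; congr (_ + _).
  transitivity (\sum_(x in [set u i | i in [set: 'I_m]]) F x); first exact: eq_bigl.
  rewrite big_imset /=; last by move=> x y _ _; apply: uinj.
  by apply: eq_bigl => i; rewrite in_setT.
by apply: eq_bigl => x; rewrite in_setC.
Qed.

Lemma card_missed n m (u : 'I_m -> 'I_n) : injective u -> m <= n ->
  #|missed u| = n - m.
Proof.
move=> uinj mn; have := cardsC [set u i | i in [set: 'I_m]].
by rewrite card_imset // cardsT !card_ord; lia.
Qed.

Lemma sum_deg_image_le n m (G : sgraph n) (u : 'I_m -> 'I_n) : injective u ->
  \sum_i deg G (u i) <= 2 * nedges G.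
Proof. by move=> uinj; rewrite -handshake (sum_split_image _ uinj) leq_addr. Qed.

Lemma count_gt_le (I : finType) (F : I -> nat) c :
  (c + 1) * \sum_i (c < F i : nat) <= \sum_i F i.
Proof. by rewrite big_distrr; apply: leq_sum => i _; case: ltnP => /=; lia. Qed.

Lemma low_degree_card d n k (G : sgraph n) (u : 'I_(n - k) -> 'I_n) :
  injective u -> 2 * nedges G <= d * n -> d * n < (n - k) * (d + 1) ->
  exists i, deg G (u i) <= d.
Proof.
move=> uinj sparse big; have [i lowi|high] := pickP (fun i => deg G (u i) <= d).
  by exists i.
suff : \sum_(i < n - k) (d + 1) <= \sum_i deg G (u i).
  by rewrite sum_nat_const card_ord; have := sum_deg_image_le G uinj; lia.
by apply: leq_sum => i _; have := high i; rewrite /=; lia.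
Qed.

Section MoreEdges.
Variables (d n k : nat) (G H : sgraph n) (u w : 'I_(n - k) -> 'I_n).
Hypotheses (uinj : injective u) (winj : injective w) (kn : k <= n).
Hypothesis iso : forall i, card_iso G (u i) H (w i).
Hypothesis fewer : nedges G < nedges H.

Local Notation gap := (nedges H - nedges G).
Local Notation high := (\sum_i (2 * d < deg G (u i) : nat)).

Lemma deg_shift i : deg H (w i) = deg G (u i) + gap.
Proof. by have := card_iso_edges (iso i); lia. Qed.

Lemma missed_deg_gap : 2 * gap + \sum_(x in missed u) deg G x =
  (n - k) * gap + \sum_(x in missed w) deg H x.
Proof.
have := handshake G; have := handshake H.
rewrite (sum_split_image (deg G) uinj) (sum_split_image (deg H) winj).
rewrite (eq_bigr _ (fun i _ => deg_shift i)) big_split /= sum_nat_const card_ord; lia.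
Qed.

(* Raising the shared degrees by gap raises the excess at 2d + gap only
   at shared vertices of degree above 2d, by at most gap each. *)
Lemma shared_excess_shift :
  \sum_i (deg H (w i) - (2 * d + gap)) <=
  \sum_i (deg G (u i) - (2 * d + gap)) + gap * high.
Proof.
rewrite big_distrr -big_split /=; apply: leq_sum => i _.
by rewrite deg_shift; case: ltnP => /=; lia.
Qed.

Lemma gap_bound i0 : deg G (u i0) <= d ->
  (n - k) * gap <= (high + k + 2) * gap + d * (2 * k + 1).
Proof.
move=> low; set T := 2 * d + gap.
have dT : d <= T by rewrite /T; lia.
have := card_iso_excess (iso i0) low dT.
rewrite /excess (sum_split_image (fun x => deg G x - T) uinj).
rewrite (sum_split_image (fun x => deg H x - T) winj).
have missedG : \sum_(x in missed u) deg G x <=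
    \sum_(x in missed u) (deg G x - T) + k * T.
  have -> : k * T = \sum_(x in missed u) T.
    by rewrite sum_nat_const card_missed ?leq_subr ?subKn.
  by rewrite -big_split /=; apply: leq_sum => x _; lia.
have missedH : \sum_(x in missed w) (deg H x - T) <= \sum_(x in missed w) deg H x.
  by apply: leq_sum => x _; exact: leq_subr.
have kT : k * T = 2 * d * k + k * gap by rewrite /T; lia.
have := missed_deg_gap; have := shared_excess_shift; rewrite -/T.
clearbody T; lia.
Qed.

Lemma no_more_edges : (k + d + 5) * (4 * d + 6) <= n ->
  2 * nedges G <= d * n -> False.
Proof.
move=> nbig sparse.
have [i0 low] : exists i, deg G (u i) <= d.
  by apply: low_degree_card uinj sparse _; nia.
have highle : (2 * d + 1) * high <= d * n.
  by apply: leq_trans (count_gt_le _ _) (leq_trans (sum_deg_image_le G uinj) sparse).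
have room : high + k + 2 + d * (2 * k + 1) < n - k.
  have : (2 * d + 1) * (high + k + 2 + d * (2 * k + 1) + k + 1) <= (2 * d + 1) * n by nia.
  by rewrite leq_pmul2l //; lia.
have gap_pos : 0 < gap by lia.
have := gap_bound low; nia.
Qed.

End MoreEdges.

Lemma nat_bound_of_rat d n k :
  ((k%:R : rat) <= (n%:R / (4 * d + 6)%:R) - d%:R - 5)%R ->
  (k + d + 5) * (4 * d + 6) <= n.
Proof.
move=> h; have pos : (0 < (4 * d + 6)%:R :> rat)%R by rewrite ltr0n addn_gt0 orbT.
have : ((k + d + 5)%:R <= (n%:R / (4 * d + 6)%:R : rat))%R.
  by move: h; set q := (_ / _)%R; rewrite !natrD; lra.
by rewrite ler_pdivlMr // -natrM ler_nat.
Qed.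

Theorem theorem1p3 (d n k : nat) (G H : sgraph n)
  (u w : 'I_(n - k) -> 'I_n) :
  (3 <= n)%N ->
  ((k%:R : rat) <= (n%:R / (4 * d + 6)%:R) - d%:R - 5)%R ->
  (2 * nedges G <= d * n)%N ->
  (2 * nedges H <= d * n)%N ->
  injective u -> injective w ->
  (forall i, card_iso G (u i) H (w i)) ->
  nedges G = nedges H.
Proof.
move=> _ /nat_bound_of_rat nbig sparseG sparseH uinj winj iso.
have isoHG i : card_iso H (w i) G (u i) by apply: card_iso_sym.
have kn : k <= n by move: nbig; nia.
case: (ltngtP (nedges G) (nedges H)) => // fewer; exfalso.
- exact: (no_more_edges uinj winj kn iso fewer nbig sparseG).
- exact: (no_more_edges winj uinj kn isoHG fewer nbig sparseH).
Qed.
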